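(* Let $f:\mathbb R^n\to\mathbb R$ be a non-degenerate polynomial with $f(0)=0$. Then $$L_e(f)=\sup\{h(a):a\in R_1\},\qquad R_1=\{a\in\mathbb R^n_{\ge0}:0\le m_f(a)\le1\}.$$
   Context: Write $f=\sum_\nu c_\nu x^\nu$. $\Gamma_+(f)$ is the convex hull of $\bigcup_{c_\nu\ne0}(\nu+\mathbb R^n_{\ge0})$. For $a\in\mathbb R^n_{\ge0}$: $m_f(a)=\min\{\langle a,\nu\rangle:\nu\in\Gamma_+(f)\}$, $\gamma_f(a)=\{\nu\in\Gamma_+(f):\langle a,\nu\rangle=m_f(a)\}$, $s(a)=\sum_ia_i$, $h(a)=m_f(a)-s(a)$. For a face $\gamma$, $f_\gamma=\sum_{\nu\in\gamma}c_\nu x^\nu$; $f$ is non-degenerate if for every compact face $\gamma$, $\nabla f_\gamma$ does not vanish at points of $(\mathbb R^* )^n$ where $f_\gamma=0$. On $\mathbb R^n_{\ge0}$ put $a\sim b$ iff $\gamma_f(a)=\gamma_f(b)$; this gives a subdivision of $\mathbb R^n_{\ge0}$ into cones; $\Gamma^{(1)}(f)$ is the set of primitive integer generators of its one-dimensional cones and $\Gamma^{(1)}_+(f)=\{a\in\Gamma^{(1)}(f):m_f(a)>0\}$. The leading exponent is $L_e(f)=\sup\bigl(\{0\}\cup\{1-s(a)/m_f(a):a\in\Gamma^{(1)}_+(f)\}\bigr)$. *)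

From HB Require Import structures.
From mathcomp Require Import all_boot all_order all_algebra.
From mathcomp Require Import boolp classical_sets reals.
From mathcomp Require Import mpoly.

Set Implicit Arguments.
Unset Strict Implicit.
Unset Printing Implicit Defensive.

Import Order.TTheory GRing.Theory Num.Theory.
Local Open Scope ring_scope.
Local Open Scope classical_set_scope.

Section Newton.
Variables (R : realType) (n : nat).
Implicit Types (f : {mpoly R[n]}) (a b x y : 'I_n -> R).

Definition dotv a x : R := \sum_(i < n) a i * x i.
Definition sv a : R := \sum_(i < n) a i.
Definition nonneg a : Prop := forall i, 0 <= a i.
Definition expv (m : 'X_{1..n}) : 'I_n -> R := fun i => (m i)%:R.

Definition shifted_supp f : set ('I_n -> R) :=
  [set x | exists2 m, m \in msupp f & forall i, expv m i <= x i].

Definition conv_hull (S : set ('I_n -> R)) : set ('I_n -> R) :=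
  [set x | exists k (w : 'I_k -> R) (p : 'I_k -> ('I_n -> R)),
     [/\ forall j, 0 <= w j, \sum_(j < k) w j = 1, forall j, S (p j) &
         forall i, x i = \sum_(j < k) w j * p j i]].

Definition Gamma_plus f : set ('I_n -> R) := conv_hull (shifted_supp f).

Definition m_f f a : R := inf [set dotv a x | x in Gamma_plus f].

Definition gamma_f f a : set ('I_n -> R) :=
  [set x | Gamma_plus f x /\ dotv a x = m_f f a].

Definition h_f f a : R := m_f f a - sv a.

(* faces of Gamma_+(f): the sets gamma_f(a), a in R^n_{>=0}; compact = bounded
   (these faces are closed) *)
Definition compact_face f (g : set ('I_n -> R)) : Prop :=
  (exists2 a, nonneg a & g = gamma_f f a) /\
  exists M : R, forall x, g x -> forall i, `|x i| <= M.

Definition f_face f (g : set ('I_n -> R)) : {mpoly R[n]} :=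
  \sum_(m <- msupp f | `[< g (expv m) >]) f@_m *: 'X_[m].

Definition newton_nondegenerate f : Prop :=
  forall g, compact_face f g ->
  forall x, (forall i, x i != 0) -> meval x (f_face f g) = 0 ->
  exists i, meval x (mderiv i (f_face f g)) != 0.

(* a ~ b iff gamma_f(a) = gamma_f(b) (on R^n_{>=0}).  The cone (equivalence class)
   of a is one-dimensional with generator a iff a <> 0 and the class of a
   spans the line R a. *)
Definition one_dim_cone_gen f a : Prop :=
  nonneg a /\ a <> (fun _ => 0) /\
  forall b, nonneg b -> gamma_f f b = gamma_f f a -> exists t : R, b = (fun i => t * a i).

Definition primitive_int a : Prop :=
  exists k : 'I_n -> nat, (forall i, a i = (k i)%:R) /\ \big[gcdn/0%N]_(i < n) k i = 1%N.

Definition Gamma1 f : set ('I_n -> R) :=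
  [set a | one_dim_cone_gen f a /\ primitive_int a].
Definition Gamma1_plus f : set ('I_n -> R) :=
  [set a | Gamma1 f a /\ 0 < m_f f a].

Definition L_e f : R :=
  sup ([set 0] `|` [set 1 - sv a / m_f f a | a in Gamma1_plus f]).

Definition R_1 f : set ('I_n -> R) :=
  [set a | nonneg a /\ 0 <= m_f f a <= 1].

End Newton.

From HB Require Import structures.
From mathcomp Require Import all_boot all_order all_algebra mpoly.
From mathcomp Require Import boolp classical_sets reals ring lra zify.

(* Since h(a) = m_f(a) (1 - s(a)/m_f(a)) <= 1 - s(a)/m_f(a) on R_1, with equality
   once a is rescaled to m_f(a) = 1, both sides equal max(0, 1 - inf s/m_f).  The
   infimum of s over { a >= 0 : m_f(a) >= 1 } is a linear program over the polyhedron
   { a >= 0 : <a, nu> >= 1 for nu in supp f }; it is attained at a vertex.  A vertex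
   is rational, and any c >= 0 defining the same face of Gamma_+(f) is a multiple of
   it, so its primitive integer multiple lies in Gamma^(1)_+(f). *)

Set Implicit Arguments.
Unset Strict Implicit.
Unset Printing Implicit Defensive.
Import Order.TTheory GRing.Theory Num.Theory.
Local Open Scope ring_scope.
Local Open Scope classical_set_scope.

Lemma exists_seq_argmin (R : realType) (T : eqType) (s : seq T) (F : T -> R) :
  s != [::] -> exists2 x, x \in s & forall y, y \in s -> F x <= F y.
Proof.
elim: s => // x s IH _.
have [->|/IH [z zs Hz]] := eqVneq s [::].
  by exists x; rewrite ?mem_head // => y; rewrite inE => /eqP ->.
have [Fxz|Fzx] := lerP (F x) (F z).
  exists x; first exact: mem_head.
  by move=> y; rewrite inE => /orP [/eqP ->//|/Hz]; apply: le_trans.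
exists z; first by rewrite inE zs orbT.
by move=> y; rewrite inE => /orP [/eqP ->|/Hz //]; apply: ltW.
Qed.

Section DotvLinear.
Variables (R : realType) (n : nat).
Implicit Types (a x y : 'I_n -> R) (t : R).

Lemma dotvC a x : dotv a x = dotv x a.
Proof. by apply: eq_bigr => i _; rewrite mulrC. Qed.

Lemma dotv_addl a b t x :
  dotv (fun i => a i + t * b i) x = dotv a x + t * dotv b x.
Proof.
by rewrite /dotv mulr_sumr -big_split; apply: eq_bigr => i _; rewrite mulrDl mulrA.
Qed.

Lemma dotv_addr a x y t :
  dotv a (fun i => x i + t * y i) = dotv a x + t * dotv a y.
Proof. by rewrite !(dotvC a) dotv_addl. Qed.

Lemma dotv_scalel a t x : dotv (fun i => t * a i) x = t * dotv a x.
Proof. by rewrite /dotv mulr_sumr; apply: eq_bigr => i _; rewrite mulrA. Qed.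

Lemma dotv_oppr a x : dotv a (fun i => - x i) = - dotv a x.
Proof. by rewrite /dotv -sumrN; apply: eq_bigr => i _; rewrite mulrN. Qed.

Lemma sv_ge0 a : nonneg a -> 0 <= sv a.
Proof. by move=> a_ge0; apply: sumr_ge0 => i _. Qed.

Lemma dotv1l x : dotv (fun _ => 1) x = sv x.
Proof. by apply: eq_bigr => i _; rewrite mul1r. Qed.

Lemma sv_scale a t : sv (fun i => t * a i) = t * sv a.
Proof. by rewrite /sv mulr_sumr. Qed.

End DotvLinear.

Section PolyhedronVertex.
Variables (R : realType) (n k : nat) (A : 'I_k -> 'I_n -> R) (b : 'I_k -> R).
Variable c : 'I_n -> R.
Implicit Types x y d : 'I_n -> R.

Definition feasible x := forall j, b j <= dotv (A j) x.
Definition active x : {set 'I_k} := [set j | dotv (A j) x == b j].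
Definition is_vertex x :=
  forall d, (forall j, j \in active x -> dotv (A j) d = 0) -> d = (fun _ => 0).

Hypothesis recession_cost_pos : forall d,
  (forall j, 0 <= dotv (A j) d) -> dotv c d <= 0 -> d = (fun _ => 0).

Lemma nonvertex_descent x : feasible x -> ~ is_vertex x ->
  exists y, [/\ feasible y, dotv c y <= dotv c x & active x \proper active y].
Proof.
move=> Fx /existsNP [d /not_implyP [Hd d_neq0]].
have [e [He ce e_neq0]] : exists e, [/\ forall j, j \in active x -> dotv (A j) e = 0,
    dotv c e <= 0 & e <> (fun _ => 0)].
  have [cd_le0|cd_gt0] := lerP (dotv c d) 0; first by exists d.
  exists (fun i => - d i); split.
  - by move=> j /Hd; rewrite dotv_oppr => ->; rewrite oppr0.
  - by rewrite dotv_oppr oppr_le0 ltW.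
  - move=> nd_eq0; apply: d_neq0; apply/funext => i.
    by apply/eqP; rewrite -oppr_eq0; apply/eqP; apply: (congr1 (fun g => g i) nd_eq0).
have [j1 Aj1e] : exists j, dotv (A j) e < 0.
  apply: contrapT => /forallNP Ae_ge0; apply: e_neq0; apply: recession_cost_pos => // j.
  by rewrite leNgt; apply/negP => ?; apply: (Ae_ge0 j).
(* Ratio test: the largest step along e keeping every constraint satisfied, at which
   some constraint j0 not active at x becomes active. *)
pose step j := (dotv (A j) x - b j) / - dotv (A j) e.
case: (@arg_minP _ _ _ j1 (fun j => dotv (A j) e < 0) step Aj1e) => j0 Aj0e step_min.
pose t := step j0.
have t_ge0 : 0 <= t by rewrite divr_ge0 ?subr_ge0 ?Fx // oppr_ge0 ltW.
exists (fun i => x i + t * e i); split.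
- move=> j; rewrite dotv_addr.
  have [Aje_ge0|Aje_lt0] := lerP 0 (dotv (A j) e).
    have := Fx j; have : 0 <= t * dotv (A j) e by rewrite mulr_ge0.
    lra.
  have := step_min j Aje_lt0; rewrite /step ler_pdivlMr ?oppr_gt0 // mulrN -/(step j0) -/t.
  lra.
- rewrite dotv_addr; have : t * dotv c e <= 0 by rewrite mulr_ge0_le0.
  lra.
- apply/properP; split.
  + apply/fintype.subsetP => j j_act.
    by move: (j_act); rewrite !inE dotv_addr He // mulr0 addr0.
  + exists j0; last by apply/negP => /He /eqP; rewrite lt_eqF.
    rewrite inE dotv_addr /t /step; apply/eqP; field.
    by rewrite lt_eqF.
Qed.

Lemma exists_vertex_le x : feasible x ->
  exists y, [/\ feasible y, dotv c y <= dotv c x & is_vertex y].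
Proof.
have card_active_le y : (#|active y| <= k)%N by rewrite -[X in (_ <= X)%N]card_ord max_card.
move: {-1}(k - #|active x|)%N (leqnn (k - #|active x|)) => m.
elim: m x => [|m IH] x bound Fx;
  have [vx|nvx] := pselect (is_vertex x); try by exists x.
  have [y [_ _ /proper_card]] := nonvertex_descent Fx nvx.
  by have := card_active_le y; lia.
have [y [Fy cy /proper_card grow]] := nonvertex_descent Fx nvx.
have [|z [Fz cz vz]] := IH y _ Fy; first by have := card_active_le y; lia.
by exists z; split => //; apply: le_trans cy.
Qed.

End PolyhedronVertex.

(* The active equations of a vertex determine it uniquely; they form a full-rank
   linear system over Q, whose unique real solution is the rational one. *)
Lemma rational_vertex (R : realType) (n k : nat)
    (Aq : 'I_k -> 'I_n -> rat) (bq : 'I_k -> rat) (x : 'I_n -> R) :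
  is_vertex (fun j i => ratr (Aq j i)) (fun j => ratr (bq j)) x ->
  exists q : 'I_n -> rat, forall i, x i = ratr (q i).
Proof.
move=> vx.
pose act j := j \in active (fun j i => ratr (Aq j i)) (fun j => ratr (bq j)) x.
pose BQ : 'M[rat]_(n, k) := \matrix_(i, j) if act j then Aq j i else 0.
pose eQ : 'rV[rat]_k := \row_j if act j then bq j else 0.
pose xr : 'rV[R]_n := \row_i x i.
have x_sol : xr *m map_mx ratr BQ = map_mx ratr eQ.
  apply/rowP => j; rewrite !mxE.
  under eq_bigr do rewrite !mxE.
  case act_j: (act j); last by rewrite big1 ?rmorph0 // => i _; rewrite mulr0.
  by move: act_j; rewrite /act inE => /eqP <-; rewrite dotvC.
have BR_free : row_free (map_mx (@ratr R) BQ).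
  rewrite -kermx_eq0; apply/eqP/row_matrixP => i; rewrite row0.
  have uB : row i (kermx (map_mx (@ratr R) BQ)) *m map_mx ratr BQ = 0.
    by rewrite -row_mul mulmx_ker row0.
  move: (row i _) uB => u uB.
  have u0 : (fun i' => u 0 i') = (fun _ => 0).
    apply: vx => j act_j; have /rowP /(_ j) := uB; rewrite !mxE => <-.
    by rewrite dotvC; apply: eq_bigr => i' _; rewrite !mxE /act act_j.
  by apply/rowP => j; rewrite mxE (congr1 (fun g => g j) u0).
have /submxP [D eQ_D] : (eQ <= BQ)%MS.
  by rewrite -(map_submx (@ratr R)) -x_sol submxMl.
have xr_D : xr = map_mx ratr D.
  by apply: (row_free_inj BR_free); rewrite x_sol eQ_D map_mxM.
by exists (fun i => D 0 i) => i; have /rowP /(_ i) := xr_D; rewrite !mxE.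
Qed.

(* Clear the denominators, then divide by the gcd of the resulting numerators. *)
Lemma primitive_multiple_rat (R : realType) (n : nat) (q : 'I_n -> rat) (i0 : 'I_n) :
  (forall i, 0 <= q i) -> q i0 != 0 ->
  exists2 lam : R, 0 < lam & primitive_int (fun i => lam * ratr (q i)).
Proof.
move=> q_ge0 qi0_neq0.
pose D := \prod_j denq (q j).
pose z i := numq (q i) * \prod_(j | j != i) denq (q j).
have zE i : ((z i)%:~R : R) = ratr (q i) * (D%:~R : R).
  rewrite /z intrM /D [in RHS](bigD1 i) //= intrM mulrA; congr (_ * _).
  by have := congr1 (@ratr R) (numqE (q i)); rewrite rmorphM /= !rmorph_int.
pose num i := `|z i|%N.
have numE i : ((num i)%:R : R) = ratr (q i) * (D%:~R : R).
  rewrite natr_absz ger0_norm ?zE //.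
  by rewrite mulr_ge0 ?numq_ge0 // prodr_ge0 // => j _; rewrite denq_ge0.
pose g := \big[gcdn/0]_i num i.
have g_dvd i : (g %| num i)%N by apply: (@biggcdn_inf _ i).
have g_gt0 : (0 < g)%N.
  have num_i0_gt0 : (0 < num i0)%N.
    rewrite absz_gt0 mulf_neq0 ?numq_eq0 //.
    by apply/prodf_neq0 => j _; rewrite denq_neq0.
  by rewrite lt0n; apply: contraTneq (g_dvd i0) => ->; rewrite dvd0n -lt0n.
have gK i : (num i %/ g * g)%N = num i by rewrite divnK.
exists (D%:~R / g%:R).
  by rewrite divr_gt0 ?ltr0n // ltr0z prodr_gt0 // => j _; rewrite denq_gt0.
exists (fun i => num i %/ g)%N; split.
  move=> i; apply: (mulIf (_ : g%:R != 0 :> R)); first by rewrite pnatr_eq0 -lt0n.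
  by rewrite -natrM gK numE; field; rewrite pnatr_eq0 -lt0n.
apply/eqP; rewrite -(eqn_pmul2l g_gt0) muln1 -{3}/g.
rewrite (big_morph (fun x => g * x)%N (muln_gcdr g) (muln0 g)).
by apply/eqP/eq_bigr => i _; rewrite mulnC gK.
Qed.

Section NewtonPolyhedron.
Variables (R : realType) (n : nat) (f : {mpoly R[n]}).
Local Notation ev := (@expv R n).
Implicit Types (a x y : 'I_n -> R) (m : 'X_{1..n}).

Lemma shifted_supp_Gamma_plus x : shifted_supp f x -> Gamma_plus f x.
Proof.
move=> fx; exists 1%N, (fun _ => 1), (fun _ => x); split => //.
- by rewrite big_ord1.
- by move=> i; rewrite big_ord1 mul1r.
Qed.

Lemma expv_Gamma_plus m : m \in msupp f -> Gamma_plus f (ev m).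
Proof. by move=> mf; apply: shifted_supp_Gamma_plus; exists m. Qed.

Lemma Gamma_plus_dotv_ge a L x : nonneg a ->
  (forall m, m \in msupp f -> L <= dotv a (ev m)) ->
  Gamma_plus f x -> L <= dotv a x.
Proof.
move=> a_ge0 L_le [k [w [p [w_ge0 w_sum1 p_supp x_eq]]]].
rewrite /dotv (eq_bigr (fun i => \sum_(j < k) w j * (a i * p j i))); last first.
  by move=> i _; rewrite x_eq mulr_sumr; apply: eq_bigr => j _; rewrite mulrCA.
rewrite exchange_big -[L]mul1r -w_sum1 mulr_suml; apply: ler_sum => j _.
rewrite -mulr_sumr ler_wpM2l //.
have [m mf m_le] := p_supp j; apply: (le_trans (L_le m mf)).
by apply: ler_sum => i _; rewrite ler_wpM2l.
Qed.

Lemma m_f_msupp_min a m0 : nonneg a -> m0 \in msupp f ->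
  (forall m, m \in msupp f -> dotv a (ev m0) <= dotv a (ev m)) ->
  m_f f a = dotv a (ev m0).
Proof.
move=> a_ge0 m0f m0_min.
have lb : forall r, [set dotv a x | x in Gamma_plus f] r -> dotv a (ev m0) <= r.
  by move=> _ [x fx <-]; apply: Gamma_plus_dotv_ge.
apply/eqP; rewrite eq_le; apply/andP; split.
- apply: ge_inf; first by exists (dotv a (ev m0)).
  by exists (ev m0); first exact: expv_Gamma_plus.
- by apply: lb_le_inf => //; exists (dotv a (ev m0)), (ev m0) => //; exact: expv_Gamma_plus.
Qed.

Lemma exists_m_f_argmin a : nonneg a -> msupp f != [::] ->
  exists2 m0, m0 \in msupp f & m_f f a = dotv a (ev m0) /\
    forall m, m \in msupp f -> dotv a (ev m0) <= dotv a (ev m).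
Proof.
move=> a_ge0 /(exists_seq_argmin (fun m => dotv a (ev m))) [m0 m0f m0_min].
by exists m0 => //; split => //; apply: m_f_msupp_min.
Qed.

(* With an empty support the infimum is taken over the empty set, whose junk value is 0. *)
Lemma m_f_msupp_nil a : msupp f = [::] -> m_f f a = 0.
Proof.
move=> f0; rewrite /m_f.
suff -> : [set dotv a x | x in Gamma_plus f] = set0 by rewrite /inf image_set0 sup0 oppr0.
apply/seteqP; split => // r [x [[|k] [w [p [_ w_sum1 p_supp _]]]] _].
  by move/eqP: w_sum1; rewrite big_ord0 eq_sym oner_eq0.
by have [m] := p_supp ord0; rewrite f0.
Qed.

Lemma m_f0 : m_f f (fun _ => 0) = 0.
Proof.
have [f0|fn0] := eqVneq (msupp f) [::]; first exact: m_f_msupp_nil.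
have [m0 _ [-> _]] := @exists_m_f_argmin (fun _ => 0) (fun=> lexx 0) fn0.
by rewrite /dotv big1 // => i _; rewrite mul0r.
Qed.

Lemma m_f_scale a t : nonneg a -> 0 < t -> m_f f (fun i => t * a i) = t * m_f f a.
Proof.
move=> a_ge0 t_gt0.
have [f0|fn0] := eqVneq (msupp f) [::]; first by rewrite !m_f_msupp_nil // mulr0.
have [m0 m0f [-> m0_min]] := exists_m_f_argmin a_ge0 fn0.
rewrite (@m_f_msupp_min _ m0) ?dotv_scalel //.
  by move=> i; rewrite mulr_ge0 ?(ltW t_gt0).
by move=> m mf; rewrite !dotv_scalel ler_pM2l ?m0_min.
Qed.

Lemma gamma_f_scale a t : nonneg a -> 0 < t -> gamma_f f (fun i => t * a i) = gamma_f f a.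
Proof.
move=> a_ge0 t_gt0; apply/seteqP; split => x [fx ax];
  split => //; move: ax; rewrite m_f_scale // dotv_scalel.
  by move/(mulfI (lt0r_neq0 t_gt0)).
by move=> ->.
Qed.

End NewtonPolyhedron.

(* The polyhedron { x >= 0 | <x, nu> >= 1 for nu in supp f } of points with m_f >= 1,
   written as a system with rational coefficients: n sign constraints followed by
   one constraint per monomial of f. *)
Section NewtonLP.
Variables (R : realType) (n : nat) (f : {mpoly R[n]}).
Local Notation ev := (@expv R n).
Local Notation K := (size (msupp f)).
Implicit Types (a x y d : 'I_n -> R) (m : 'X_{1..n}).

Definition newton_lhs (j : 'I_(n + K)) (i : 'I_n) : rat :=
  match split j with
  | inl i0 => (i0 == i)%:R
  | inr l => ((nth 0%MM (msupp f) l) i)%:R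
  end.
Definition newton_rhs (j : 'I_(n + K)) : rat :=
  match split j with inl _ => 0 | inr _ => 1 end.

Local Notation A := (fun j i => ratr (newton_lhs j i) : R).
Local Notation b := (fun j => ratr (newton_rhs j) : R).

Lemma newton_row_sign i0 x : dotv (A (lshift K i0)) x = x i0.
Proof.
rewrite /dotv /newton_lhs (unsplitK (inl _ i0)) (bigD1 i0) //= eqxx rmorph1 mul1r.
by rewrite big1 ?addr0 // => i /negbTE; rewrite eq_sym => ->; rewrite rmorph0 mul0r.
Qed.

Lemma newton_row_monomial l x :
  dotv (A (rshift n l)) x = dotv x (ev (nth 0%MM (msupp f) l)).
Proof.
rewrite dotvC /dotv /newton_lhs (unsplitK (inr _ l)).
by apply: eq_bigr => i _; rewrite rmorph_nat.
Qed.

Lemma newton_rhs_sign i0 : b (lshift K i0) = 0.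
Proof. by rewrite /newton_rhs (unsplitK (inl _ i0)) rmorph0. Qed.

Lemma newton_rhs_monomial l : b (rshift n l) = 1.
Proof. by rewrite /newton_rhs (unsplitK (inr _ l)) rmorph1. Qed.

Lemma split_ind (P : 'I_(n + K) -> Prop) :
  (forall i, P (lshift K i)) -> (forall l, P (rshift n l)) -> forall j, P j.
Proof. by move=> Pl Pr j; rewrite -(splitK j); case: (split j). Qed.

Lemma newton_feasibleP x : feasible A b x <->
  nonneg x /\ forall m, m \in msupp f -> 1 <= dotv x (ev m).
Proof.
split=> [Fx|[x_ge0 x_ge1]].
  split=> [i|m mf]; first by have := Fx (lshift K i); rewrite newton_row_sign newton_rhs_sign.
  have := Fx (rshift n (Ordinal (etrans (index_mem m (msupp f)) mf))).
  by rewrite newton_row_monomial newton_rhs_monomial /= nth_index.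
apply: split_ind => [i|l]; first by rewrite newton_row_sign newton_rhs_sign.
by rewrite newton_row_monomial newton_rhs_monomial x_ge1 // mem_nth.
Qed.

Lemma newton_vertex_kernel x : is_vertex A b x ->
  forall d, (forall i, x i = 0 -> d i = 0) ->
  (forall m, m \in msupp f -> dotv x (ev m) = 1 -> dotv d (ev m) = 0) ->
  d = (fun _ => 0).
Proof.
move=> vx d d_sign d_mon; apply: vx; apply: split_ind => [i|l]; rewrite inE.
  by rewrite !newton_row_sign newton_rhs_sign => /eqP /d_sign.
by rewrite !newton_row_monomial newton_rhs_monomial => /eqP /d_mon; apply; rewrite mem_nth.
Qed.

Lemma newton_recession_sv_pos d :
  (forall j, 0 <= dotv (A j) d) -> dotv (fun _ => 1) d <= 0 -> d = (fun _ => 0).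
Proof.
move=> Ad_ge0 sd_le0.
have d_ge0 i : 0 <= d i by have := Ad_ge0 (lshift K i); rewrite newton_row_sign.
have sd0 : sv d = 0.
  apply/eqP; rewrite eq_le sumr_ge0 // andbT.
  by rewrite -dotv1l.
by apply/funext => i; apply: (psumr_eq0P (fun i _ => d_ge0 i) sd0).
Qed.

Section FeasibleVertex.
Variable x : 'I_n -> R.
Hypotheses (Fx : feasible A b x) (vx : is_vertex A b x) (fn0 : msupp f != [::]).

Lemma newton_vertex_tight : exists2 m, m \in msupp f & dotv x (ev m) = 1.
Proof.
apply: contrapT => /forall2NP no_tight.
have [x_ge0 x_ge1] := (newton_feasibleP x).1 Fx.
have x0 : x = (fun _ => 0).
  by apply: (newton_vertex_kernel vx) => // m mf x_m; case: (no_tight m).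
have [m mf] : exists m, m \in msupp f.
  by case: (msupp f) fn0 => // m s _; exists m; rewrite mem_head.
have := x_ge1 m mf; rewrite x0 /dotv big1 ?ler10 // => i _; exact: mul0r.
Qed.

Lemma newton_vertex_m_f : m_f f x = 1.
Proof.
have [x_ge0 x_ge1] := (newton_feasibleP x).1 Fx.
have [m mf x_m] := newton_vertex_tight.
by rewrite (m_f_msupp_min x_ge0 mf) // => m' m'f; rewrite x_m x_ge1.
Qed.

(* c takes the constant value m_f(c) on the face { <x, .> = 1 } of Gamma_+(f), which
   contains every tight monomial nu and nu + e_i whenever x_i = 0; hence c - m_f(c) x
   vanishes on all constraints active at x. *)
Lemma newton_vertex_same_face c : nonneg c -> gamma_f f c = gamma_f f x ->
  c = (fun i => m_f f c * x i).
Proof.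
move=> c_ge0 same_face.
have [x_ge0 x_ge1] := (newton_feasibleP x).1 Fx.
have [m1 m1f x_m1] := newton_vertex_tight.
have on_face y : Gamma_plus f y -> dotv x y = 1 -> dotv c y = m_f f c.
  move=> fy xy; have : gamma_f f x y by split; rewrite // newton_vertex_m_f.
  by rewrite -same_face => -[].
have c_tight m : m \in msupp f -> dotv x (ev m) = 1 -> dotv c (ev m) = m_f f c.
  by move=> mf; apply: on_face; exact: expv_Gamma_plus.
have c_sign i : x i = 0 -> c i = 0.
  move=> xi0; pose y := fun i' => ev m1 i' + 1 * (i' == i)%:R.
  have fy : Gamma_plus f y.
    by apply: shifted_supp_Gamma_plus; exists m1 => // i'; rewrite lerDl mul1r ler0n.
  have dotv_ei a : dotv a (fun i' => (i' == i)%:R) = a i.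
    by rewrite /dotv (bigD1 i) //= eqxx mulr1 big1 ?addr0 // => i' /negbTE ->; rewrite mulr0.
  have := on_face y fy; rewrite !dotv_addr !dotv_ei xi0 mulr0 addr0 x_m1 => /(_ erefl).
  by rewrite mul1r c_tight // -{2}[m_f f c]addr0 => /addrI.
have : (fun i => c i + (- m_f f c) * x i) = (fun _ => 0).
  apply: (newton_vertex_kernel vx) => [i xi0|m mf x_m].
    by rewrite c_sign ?xi0 ?mulr0 ?addr0.
  by rewrite dotv_addl c_tight // x_m mulr1 addrN.
move=> kernel0; apply/funext => i; have /eqP := congr1 (fun g => g i) kernel0.
by rewrite mulNr subr_eq0 => /eqP.
Qed.

End FeasibleVertex.
End NewtonLP.

Section LeadingExponent.
Variables (R : realType) (n : nat) (f : {mpoly R[n]}).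
Local Notation ev := (@expv R n).
Local Notation A := (fun j i => ratr (@newton_lhs R n f j i) : R).
Local Notation b := (fun j => ratr (@newton_rhs R n f j) : R).
Implicit Types a : 'I_n -> R.

(* Minimising s over the polyhedron { m_f >= 1 } reaches a vertex, whose ray is a
   one-dimensional cone of the fan; rescaled to a primitive integer vector it lies in
   Gamma^(1)_+(f) and does at least as well as a. *)
Lemma exists_Gamma1_plus_le a : nonneg a -> 0 < m_f f a ->
  exists2 r, Gamma1_plus f r & sv r / m_f f r <= sv a / m_f f a.
Proof.
move=> a_ge0 ma_gt0.
have fn0 : msupp f != [::].
  by apply: contraTneq ma_gt0 => f0; rewrite m_f_msupp_nil ?ltxx.
pose a1 := fun i => (m_f f a)^-1 * a i.
have a1_feas : feasible A b a1.
  have [m0 _ [ma_eq m0_min]] := exists_m_f_argmin a_ge0 fn0.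
  apply/newton_feasibleP; split=> [i|m mf].
    by rewrite mulr_ge0 ?invr_ge0 ?(ltW ma_gt0).
  by rewrite dotv_scalel ler_pdivlMl // mulr1 ma_eq m0_min.
have [x [x_feas x_sv x_vert]] := exists_vertex_le (@newton_recession_sv_pos R n f) a1_feas.
have [x_ge0 _] := (newton_feasibleP f x).1 x_feas.
have mx1 := newton_vertex_m_f x_feas x_vert fn0.
have [i0 xi0] : exists i, x i != 0.
  apply: contrapT => /forallNP x_eq0.
  suff x0 : x = (fun _ => 0) by move: mx1; rewrite x0 m_f0 => /eqP; rewrite eq_sym oner_eq0.
  by apply/funext => i; apply/eqP/negPn/negP; exact: x_eq0.
have [q x_q] := rational_vertex x_vert.
have q_ge0 i : 0 <= q i by rewrite -(ler0q R) -x_q.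
have qi0 : q i0 != 0 by apply: contraNneq xi0 => q0; rewrite x_q q0 rmorph0.
have [lam lam_gt0 prim] := primitive_multiple_rat R q_ge0 qi0.
pose r := fun i => lam * x i.
have mr : m_f f r = lam by rewrite m_f_scale // mx1 mulr1.
exists r; last first.
  rewrite mr sv_scale mulrC mulrA mulVf ?mul1r ?lt0r_neq0 //.
  by move: x_sv; rewrite !dotv1l sv_scale mulrC.
split; last by rewrite mr.
have r_q : r = (fun i => lam * ratr (q i)) by apply/funext => i; rewrite /r x_q.
split; last by rewrite r_q.
split; first by move=> i; rewrite mulr_ge0 ?(ltW lam_gt0) ?(x_ge0 i).
split.
  move/(congr1 (fun g => g i0)) => /eqP; rewrite mulf_eq0 (negbTE xi0) orbF.
  exact/negP/lt0r_neq0.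
move=> c c_ge0; rewrite gamma_f_scale ?ltW //.
move=> /(newton_vertex_same_face x_feas x_vert fn0 c_ge0) ->.
exists (m_f f c / lam); apply/funext => i; rewrite /r mulrA divfK ?lt0r_neq0 //.
Qed.

(* With 0 < m <= 1 and s <= m: m - s = m (1 - s/m) <= 1 - s/m. *)
Lemma h_f_le_leading a : 0 < m_f f a <= 1 -> sv a <= m_f f a ->
  h_f f a <= 1 - sv a / m_f f a.
Proof.
move=> /andP [m_gt0 m_le1] s_le_m.
have u_le1 : sv a / m_f f a <= 1 by rewrite ler_pdivrMr // mul1r.
rewrite /h_f -{1}[sv a](divfK (lt0r_neq0 m_gt0)).
have : 0 <= (1 - sv a / m_f f a) * (1 - m_f f a) by rewrite mulr_ge0 // subr_ge0.
by rewrite mulrBl mul1r mulrBr mulr1; lra.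
Qed.

Local Notation leading_set :=
  ([set 0] `|` [set 1 - sv a / m_f f a | a in Gamma1_plus f]).

Lemma h_f_R_1_0 : [set h_f f a | a in R_1 f] 0.
Proof.
exists (fun _ => 0); last by rewrite /h_f m_f0 /sv big1 ?subr0.
by split; [move=> i|rewrite m_f0 lexx ler01].
Qed.

Lemma h_f_R_1_has_sup : has_sup [set h_f f a | a in R_1 f].
Proof.
split; first by exists 0; exact: h_f_R_1_0.
exists 1 => _ [a [a_ge0 /andP [_ m_le1]] <-].
by rewrite /h_f; have := sv_ge0 a_ge0; lra.
Qed.

Lemma leading_set_has_sup : has_sup leading_set.
Proof.
split; first by exists 0; left.
exists 1 => _ [-> | [a [[[a_ge0 _] _] ma_gt0] <-]]; first exact: ler01.
by rewrite lerBlDr lerDl divr_ge0 ?sv_ge0 ?ltW.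
Qed.

(* a / m_f(a) lies in R_1 and has h = 1 - s(a)/m_f(a). *)
Lemma L_e_le_sup_h_f : L_e f <= sup [set h_f f a | a in R_1 f].
Proof.
apply: ge_sup; first by exists 0; left.
have sup_ub := sup_upper_bound h_f_R_1_has_sup.
move=> _ [-> | [a [[[a_ge0 _] _] ma_gt0] <-]]; first exact: sup_ub h_f_R_1_0.
apply: sup_ub.
have minv_gt0 : 0 < (m_f f a)^-1 by rewrite invr_gt0.
exists (fun i => (m_f f a)^-1 * a i).
  split; first by move=> i; rewrite mulr_ge0 ?(ltW minv_gt0).
  by rewrite m_f_scale // mulVf ?lt0r_neq0 // ler01 lexx.
by rewrite /h_f m_f_scale // mulVf ?lt0r_neq0 // sv_scale mulrC.
Qed.

Lemma sup_h_f_le_L_e : sup [set h_f f a | a in R_1 f] <= L_e f.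
Proof.
apply: ge_sup; first by case: h_f_R_1_has_sup.
move=> _ [a [a_ge0 m_01] <-].
have [h_le0|h_gt0] := lerP (h_f f a) 0.
  by apply: le_trans h_le0 _; apply: sup_upper_bound; [exact: leading_set_has_sup|left].
have s_lt_m : sv a < m_f f a by rewrite -subr_gt0.
have ma_gt0 : 0 < m_f f a by apply: le_lt_trans s_lt_m; apply: sv_ge0.
have [r Gr r_le] := exists_Gamma1_plus_le a_ge0 ma_gt0.
apply: (le_trans (h_f_le_leading _ (ltW s_lt_m))).
  by case/andP: m_01 => _ ->; rewrite ma_gt0.
apply: le_trans (lerB (lexx 1) r_le) _.
by apply: sup_upper_bound; [exact: leading_set_has_sup|right; exists r].
Qed.

End LeadingExponent.

Theorem mainTheorem5 (R : realType) (n : nat) (f : {mpoly R[n]}) :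
  newton_nondegenerate f ->
  meval (fun _ => 0) f = 0 ->
  L_e f = sup [set h_f f a | a in R_1 f].
Proof.
move=> _ _; apply/eqP; rewrite eq_le.
by rewrite L_e_le_sup_h_f sup_h_f_le_L_e.
Qed.
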